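(* Let $A=\sum_{i=1}^m e_ia_i^T$ be a real $m\times n$ matrix with rows $a_1,\dots,a_m\in\mathbb R^n$, and define $A_4=\sum_{i=1}^m a_i^{\otimes4}\in(\mathbb R^n)^{\otimes4}$, $A_3=\sum_{i=1}^m a_i\otimes a_i\otimes e_i\in\mathbb R^n\otimes\mathbb R^n\otimes\mathbb R^m$, and $A_{2,2}=\sum_{i=1}^m a_ia_i^T\otimes a_ia_i^T$, an operator on $(\mathbb R^n)^{\otimes2}$. Then \[\|A\|_{2\to4}^4=\|A_4\|_{\rm inj}=\|A_3\|_{\rm inj}^2=\|A_4\|_{{\rm inj}[\mathbb C]}=\|A_3\|_{{\rm inj}[\mathbb C]}^2=h_{\mathrm{Sep}^2(\mathbb R^n)}(A_{2,2})=h_{\mathrm{Sep}^2(\mathbb C^n)}(A_{2,2}).\]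
   Context: In this statement all norms and inner products are counting (unnormalized) ones: $\|x\|_p=(\sum_i|x_i|^p)^{1/p}$, $\langle x,y\rangle=\sum_i \bar x_iy_i$, $\|A\|_{2\to4}=\max_{x\ne0}\|Ax\|_4/\|x\|_2$ over $x\in\mathbb R^n$, and $e_i$ is the $i$-th standard basis vector. For a tensor $T\in V_1\otimes\cdots\otimes V_r$ of real spaces, $\|T\|_{\rm inj}=\max|\langle T,x_1\otimes\cdots\otimes x_r\rangle|$ over real unit vectors $x_j\in V_j$, and $\|T\|_{{\rm inj}[\mathbb C]}$ is the same maximum over complex unit vectors $x_j$. For $\mathbb F\in\{\mathbb R,\mathbb C\}$, $\mathrm{Sep}^2(\mathbb F^n)=\mathrm{conv}\{v_1v_1^*\otimes v_2v_2^*: v_1,v_2\in\mathbb F^n,\ \|v_1\|_2=\|v_2\|_2=1\}$, and for a bounded convex set $K$ of matrices, $h_K(X)=\max_{Y\in K}|\langle X,Y\rangle|$ with $\langle X,Y\rangle=\mathrm{tr}(X^*Y)$. *)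

From HB Require Import structures.
From mathcomp Require Import all_boot all_order all_algebra.
From mathcomp Require Import boolp classical_sets reals exp.
From mathcomp Require Import complex.
Set Implicit Arguments. Unset Strict Implicit. Unset Printing Implicit Defensive.
Import Order.TTheory GRing.Theory Num.Theory.
Local Open Scope classical_set_scope.
Local Open Scope ring_scope.

Section Defs.
Variable R : realType.
Local Notation C := R[i].

Definition lpnorm (p : R) (k : nat) (x : 'I_k -> R) : R :=
  (\sum_(i < k) `|x i| `^ p) `^ p^-1.

Definition clpnorm (p : R) (k : nat) (x : 'I_k -> C) : R :=
  (\sum_(i < k) Normc.normc (x i) `^ p) `^ p^-1.

Definition runit (k : nat) (x : 'I_k -> R) : Prop := lpnorm 2%:R x = 1.
Definition cunit (k : nat) (x : 'I_k -> C) : Prop := clpnorm 2%:R x = 1.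

Definition mxapply (m n : nat) (A : 'M[R]_(m, n)) (x : 'I_n -> R) : 'I_m -> R :=
  fun i => \sum_(j < n) A i j * x j.

Definition norm2to4 (m n : nat) (A : 'M[R]_(m, n)) : R :=
  sup [set r | exists x : 'I_n -> R, x <> (fun _ => 0) /\
         r = lpnorm 4%:R (mxapply A x) / lpnorm 2%:R x].

Definition tensor4 (n1 n2 n3 n4 : nat) := 'I_n1 -> 'I_n2 -> 'I_n3 -> 'I_n4 -> R.
Definition tensor3 (n1 n2 n3 : nat) := 'I_n1 -> 'I_n2 -> 'I_n3 -> R.

(* <T, x1 (x) ... (x) xr>  with <x,y> = sum conj(x_i) y_i *)
Definition pair4R n1 n2 n3 n4 (T : tensor4 n1 n2 n3 n4) x1 x2 x3 x4 : R :=
  \sum_(i < n1) \sum_(j < n2) \sum_(k < n3) \sum_(l < n4)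
     T i j k l * (x1 i * x2 j * x3 k * x4 l).
Definition pair4C n1 n2 n3 n4 (T : tensor4 n1 n2 n3 n4)
    (x1 : 'I_n1 -> C) (x2 : 'I_n2 -> C) (x3 : 'I_n3 -> C) (x4 : 'I_n4 -> C) : C :=
  \sum_(i < n1) \sum_(j < n2) \sum_(k < n3) \sum_(l < n4)
     ((T i j k l)%:C)^*%C * (x1 i * x2 j * x3 k * x4 l).
Definition pair3R n1 n2 n3 (T : tensor3 n1 n2 n3) x1 x2 x3 : R :=
  \sum_(i < n1) \sum_(j < n2) \sum_(k < n3) T i j k * (x1 i * x2 j * x3 k).
Definition pair3C n1 n2 n3 (T : tensor3 n1 n2 n3)
    (x1 : 'I_n1 -> C) (x2 : 'I_n2 -> C) (x3 : 'I_n3 -> C) : C :=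
  \sum_(i < n1) \sum_(j < n2) \sum_(k < n3)
     ((T i j k)%:C)^*%C * (x1 i * x2 j * x3 k).

Definition inj4 n1 n2 n3 n4 (T : tensor4 n1 n2 n3 n4) : R :=
  sup [set r | exists x1 x2 x3 x4, runit x1 /\ runit x2 /\ runit x3 /\ runit x4 /\
         r = `|pair4R T x1 x2 x3 x4|].
Definition inj4C n1 n2 n3 n4 (T : tensor4 n1 n2 n3 n4) : R :=
  sup [set r | exists x1 x2 x3 x4, cunit x1 /\ cunit x2 /\ cunit x3 /\ cunit x4 /\
         r = Normc.normc (pair4C T x1 x2 x3 x4)].
Definition inj3 n1 n2 n3 (T : tensor3 n1 n2 n3) : R :=
  sup [set r | exists x1 x2 x3, runit x1 /\ runit x2 /\ runit x3 /\
         r = `|pair3R T x1 x2 x3|].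
Definition inj3C n1 n2 n3 (T : tensor3 n1 n2 n3) : R :=
  sup [set r | exists x1 x2 x3, cunit x1 /\ cunit x2 /\ cunit x3 /\
         r = Normc.normc (pair3C T x1 x2 x3)].

(* A_4 = sum_i a_i^{(x)4}, A_3 = sum_i a_i (x) a_i (x) e_i, a_i = i-th row of A *)
Definition A4 m n (A : 'M[R]_(m, n)) : tensor4 n n n n :=
  fun i j k l => \sum_(t < m) A t i * A t j * A t k * A t l.
Definition A3 m n (A : 'M[R]_(m, n)) : tensor3 n n m :=
  fun i j k => \sum_(t < m) A t i * A t j * (t == k)%:R.

(* operators on F^n (x) F^n, indexed by pairs: (i,k) <-> e_i (x) e_k *)
Definition op2 (F : Type) (n : nat) := ('I_n * 'I_n)%type -> ('I_n * 'I_n)%type -> F.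

Definition kron (F : pzRingType) n (M N : 'I_n -> 'I_n -> F) : op2 F n :=
  fun p q => M p.1 q.1 * N p.2 q.2.

Definition router n (v : 'I_n -> R) : 'I_n -> 'I_n -> R := fun i j => v i * v j.
Definition couter n (v : 'I_n -> C) : 'I_n -> 'I_n -> C := fun i j => v i * (v j)^*%C.

Definition A22 m n (A : 'M[R]_(m, n)) : op2 R n :=
  fun p q => \sum_(t < m) kron (router (fun j => A t j)) (router (fun j => A t j)) p q.

Definition SepR n : set (op2 R n) :=
  [set Y | exists (k : nat) (w : 'I_k -> R) (v1 v2 : 'I_k -> 'I_n -> R),
     (forall j, 0 <= w j) /\ \sum_(j < k) w j = 1 /\
     (forall j, runit (v1 j) /\ runit (v2 j)) /\
     Y = fun p q => \sum_(j < k) w j * kron (router (v1 j)) (router (v2 j)) p q].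
Definition SepC n : set (op2 C n) :=
  [set Y | exists (k : nat) (w : 'I_k -> R) (v1 v2 : 'I_k -> 'I_n -> C),
     (forall j, 0 <= w j) /\ \sum_(j < k) w j = 1 /\
     (forall j, cunit (v1 j) /\ cunit (v2 j)) /\
     Y = fun p q => \sum_(j < k) (w j)%:C%C * kron (couter (v1 j)) (couter (v2 j)) p q].

(* h_K(X) = max_{Y in K} |<X,Y>|, <X,Y> = tr(X^* Y) = sum_{p,q} conj(X_pq) Y_pq *)
Definition hSepR n (X : op2 R n) : R :=
  sup [set r | exists Y, @SepR n Y /\ r = `|\sum_p \sum_q X p q * Y p q|].
Definition hSepC n (X : op2 C n) : R :=
  sup [set r | exists Y, @SepC n Y /\
         r = Normc.normc (\sum_p \sum_q (X p q)^*%C * Y p q)].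

End Defs.

(* Let S be the supremum of ||Ax||_4^4 = \sum_t <a_t,x>^4 over real unit vectors x.
   Homogeneity and Cauchy-Schwarz give \sum_t <a_t,u>^2 <a_t,v>^2 <= S ||u||^2 ||v||^2,
   and splitting complex vectors into real and imaginary parts turns this into
   \sum_t |<a_t,x>|^2 |<a_t,y>|^2 <= S for complex unit vectors x, y.  Each of the
   seven quantities is a supremum of values that one more Cauchy-Schwarz (or, for
   Sep^2, a convex combination) bounds by this mixed sum.  Conversely each set
   contains a value built from a single real unit vector x -- x⊗x⊗x⊗x,
   x⊗x⊗z with z the normalised vector (<a_t,x>^2)_t, or xx^T⊗xx^T -- that
   recovers \sum_t <a_t,x>^4.  Hence every quantity equals S. *)

From HB Require Import structures.
From mathcomp Require Import all_boot all_order all_algebra.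
From mathcomp Require Import boolp classical_sets reals exp.
From mathcomp Require Import complex.
From mathcomp Require Import ring lra.
Set Implicit Arguments.
Unset Strict Implicit.
Unset Printing Implicit Defensive.
Import Order.TTheory GRing.Theory Num.Theory.
Local Open Scope classical_set_scope.
Local Open Scope ring_scope.

Section MomentContraction.
Variables (F : comPzRingType) (m n : nat) (c : 'I_m -> 'I_n -> F).

Definition rowdot (x : 'I_n -> F) (t : 'I_m) : F := \sum_(j < n) c t j * x j.

Lemma rowdotZ (k : F) x t : rowdot (fun j => k * x j) t = k * rowdot x t.
Proof. by rewrite /rowdot mulr_sumr; apply: eq_bigr => j _; rewrite mulrCA. Qed.

Lemma moment4_contract (x1 x2 x3 x4 : 'I_n -> F) :
  \sum_i \sum_j \sum_k \sum_l
    ((\sum_t c t i * c t j * c t k * c t l) * (x1 i * x2 j * x3 k * x4 l)) =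
  \sum_t rowdot x1 t * rowdot x2 t * rowdot x3 t * rowdot x4 t.
Proof.
have sum4_mul (a b d e : 'I_n -> F) :
    (\sum_i a i) * (\sum_j b j) * (\sum_k d k) * (\sum_l e l) =
    \sum_i \sum_j \sum_k \sum_l a i * b j * d k * e l.
  rewrite -!mulrA mulr_suml; apply: eq_bigr => i _.
  rewrite mulr_suml mulr_sumr; apply: eq_bigr => j _.
  rewrite mulr_suml !mulr_sumr; apply: eq_bigr => k _.
  by rewrite !mulr_sumr; apply: eq_bigr => l _; rewrite !mulrA.
under [RHS]eq_bigr => t _ do rewrite /rowdot sum4_mul.
rewrite [RHS]exchange_big; apply: eq_bigr => i _; rewrite [RHS]exchange_big.
apply: eq_bigr => j _; rewrite [RHS]exchange_big; apply: eq_bigr => k _.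
rewrite [RHS]exchange_big; apply: eq_bigr => l _.
by rewrite mulr_suml; apply: eq_bigr => t _; ring.
Qed.

Lemma moment3_contract (x y : 'I_n -> F) (z : 'I_m -> F) :
  \sum_i \sum_j \sum_k
    ((\sum_t c t i * c t j * (t == k)%:R) * (x i * y j * z k)) =
  \sum_t rowdot x t * rowdot y t * z t.
Proof.
transitivity (\sum_i \sum_j \sum_t c t i * c t j * (x i * y j * z t)).
  apply: eq_bigr => i _; apply: eq_bigr => j _.
  under eq_bigr => k _ do rewrite mulr_suml.
  rewrite exchange_big; apply: eq_bigr => t _.
  rewrite (bigD1 t) //= big1 ?addr0 => [|k /negPf]; first by rewrite eqxx mulr1.
  by rewrite eq_sym => ->; rewrite mulr0 mul0r.
under [RHS]eq_bigr => t _ do rewrite /rowdot -mulrA mulr_suml.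
rewrite [RHS]exchange_big; apply: eq_bigr => i _.
under [RHS]eq_bigr => t _ do rewrite mulr_suml mulr_sumr.
rewrite [RHS]exchange_big; apply: eq_bigr => j _.
by apply: eq_bigr => t _; ring.
Qed.

Lemma moment22_contract (y1 y1' y2 y2' : 'I_n -> F) :
  \sum_(p : 'I_n * 'I_n) \sum_(q : 'I_n * 'I_n)
    ((\sum_t c t p.1 * c t q.1 * (c t p.2 * c t q.2)) *
     (y1 p.1 * y1' q.1 * (y2 p.2 * y2' q.2))) =
  \sum_t rowdot y1 t * rowdot y1' t * rowdot y2 t * rowdot y2' t.
Proof.
have sum_pair (G : 'I_n * 'I_n -> F) : \sum_p G p = \sum_i \sum_k G (i, k).
  by rewrite pair_bigA; apply: eq_bigr => -[].
transitivity (\sum_t rowdot y1 t * rowdot y2 t * rowdot y1' t * rowdot y2' t);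
  last by apply: eq_bigr => t _; ring.
rewrite -moment4_contract sum_pair; apply: eq_bigr => i _.
apply: eq_bigr => k _; rewrite sum_pair; apply: eq_bigr => j _.
apply: eq_bigr => l _; congr (_ * _); last by ring.
by apply: eq_bigr => t _; ring.
Qed.

End MomentContraction.

Section RealFacts.
Variable R : realType.

Lemma sumr_CauchySchwarz k (a b : 'I_k -> R) :
  (\sum_i a i * b i) ^+ 2 <= (\sum_i a i ^+ 2) * (\sum_i b i ^+ 2).
Proof.
(* Lagrange's identity: the double sum is 2 (sum a^2 sum b^2 - (sum a b)^2). *)
have : 0 <= \sum_i \sum_j (a i * b j - a j * b i) ^+ 2.
  by do 2 (apply: sumr_ge0 => ? _); apply: sqr_ge0.
have -> : \sum_i \sum_j (a i * b j - a j * b i) ^+ 2 =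
    \sum_i \sum_j (a i ^+ 2 * b j ^+ 2 + b i ^+ 2 * a j ^+ 2
                   - 2 * (a i * b i) * (a j * b j)).
  by do 2 (apply: eq_bigr => ? _); ring.
under eq_bigr => i _ do rewrite sumrB big_split /= -!mulr_sumr.
rewrite sumrB big_split /= -!mulr_suml -mulr_sumr.
lra.
Qed.

Lemma powR_invn_expn (s : R) k : 0 <= s -> (0 < k)%N -> (s `^ k%:R^-1) ^+ k = s.
Proof.
move=> s0 k0; rewrite -powR_mulrn ?powR_ge0 // -powRrM mulVf ?powRr1 //.
by rewrite pnatr_eq0 -lt0n.
Qed.

(* Witnesses are only required for positive [g]: [E] may be empty while [G] is
   not (e.g. [inj3] when [m = 0]). *)
Lemma sup_expn_eq (E G : set R) k : (0 < k)%N -> 0 <= sup G ->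
  (forall e, E e -> 0 <= e) -> (forall e, E e -> e ^+ k <= sup G) ->
  (forall g, G g -> 0 < g -> exists2 e, E e & g <= e ^+ k) ->
  sup E ^+ k = sup G.
Proof.
move=> k0 G0 E0 Eub Glb.
pose r := sup G `^ (k%:R)^-1.
have r0 : 0 <= r by apply: powR_ge0.
have rk : r ^+ k = sup G by apply: powR_invn_expn.
have Er : ubound E r.
  move=> e Ee; have := Eub _ Ee; rewrite -rk ler_pXn2r ?nnegrE //; exact: E0.
have supE_le : sup E <= r.
  have [->|/set0P[e Ee]] := eqVneq E set0; first by rewrite sup0.
  by apply: ge_sup => //; exists e.
have supE_ge e : E e -> e <= sup E.
  by move=> Ee; apply: sup_upper_bound => //; split; [exists e | exists r].
have supE0 : 0 <= sup E.
  have [->|/set0P[e Ee]] := eqVneq E set0; first by rewrite sup0.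
  exact: le_trans (E0 _ Ee) (supE_ge _ Ee).
apply/le_anti/andP; split.
  by rewrite -rk lerXn2r ?nnegrE.
have [->|/set0P[g Gg]] := eqVneq G set0; first by rewrite sup0 exprn_ge0.
apply: ge_sup; first by exists g.
move=> g' Gg'; have [g'0|g'pos] := lerP g' 0; first by rewrite (le_trans g'0) ?exprn_ge0.
have [e Ee le_ge] := Glb _ Gg' g'pos.
apply: le_trans le_ge _; apply: lerXn2r; rewrite ?nnegrE //; [exact: E0 | exact: supE_ge].
Qed.

Definition sqnorm k (x : 'I_k -> R) : R := \sum_i x i ^+ 2.

Lemma sqnorm_ge0 k (x : 'I_k -> R) : 0 <= sqnorm x.
Proof. by apply: sumr_ge0 => i _; apply: sqr_ge0. Qed.

Lemma sqnorm_eq0 k (x : 'I_k -> R) : sqnorm x = 0 -> x = (fun _ => 0).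
Proof.
move=> x0; apply: funext => i; apply/eqP; rewrite -sqrf_eq0; apply/eqP.
exact: (psumr_eq0P (fun i _ => sqr_ge0 (x i)) x0).
Qed.

Lemma lpnorm_expn k (x : 'I_k -> R) p : (0 < p)%N ->
  lpnorm p%:R x ^+ p = \sum_i `|x i| ^+ p.
Proof.
move=> p0; rewrite /lpnorm powR_invn_expn //;
  last by rewrite sumr_ge0 // => i _; rewrite powR_ge0.
by apply: eq_bigr => i _; rewrite powR_mulrn.
Qed.

Lemma lpnorm2_sqr k (x : 'I_k -> R) : lpnorm 2%:R x ^+ 2 = sqnorm x.
Proof. by rewrite lpnorm_expn //; apply: eq_bigr => i _; rewrite real_normK ?num_real. Qed.

Lemma runitE k (x : 'I_k -> R) : runit x <-> sqnorm x = 1.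
Proof.
rewrite /runit -lpnorm2_sqr; have : 0 <= lpnorm 2%:R x by apply: powR_ge0.
by split=> [-> | ]; [rewrite expr1n | nra].
Qed.

End RealFacts.

Section ComplexFacts.
Variable R : realType.
Local Notation normc := (@Normc.normc R).

Lemma normc_ge0 (z : R[i]) : 0 <= normc z.
Proof. by case: z => a b; apply: sqrtr_ge0. Qed.

Lemma normc_sqr (z : R[i]) : normc z ^+ 2 = complex.Re z ^+ 2 + complex.Im z ^+ 2.
Proof. by case: z => a b /=; rewrite sqr_sqrtr // addr_ge0 // sqr_ge0. Qed.

Lemma normc_real (r : R) : normc r%:C%C = `|r|.
Proof. by rewrite /= expr0n /= addr0 sqrtr_sqr. Qed.

Lemma ler_normc_sum (I : Type) (r : seq I) (F : I -> R[i]) :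
  normc (\sum_(i <- r) F i) <= \sum_(i <- r) normc (F i).
Proof.
elim: r => [|a r IH]; first by rewrite !big_nil Normc.normc0.
by rewrite !big_cons (le_trans (le_normcD _ _)) // lerD2l.
Qed.

Lemma complex_sum (I : Type) (r : seq I) (F : I -> R[i]) :
  \sum_(i <- r) F i =
  ((\sum_(i <- r) complex.Re (F i)) +i* (\sum_(i <- r) complex.Im (F i)))%C.
Proof.
elim: r => [|a r IH]; first by rewrite !big_nil.
by rewrite !big_cons IH; case: (F a).
Qed.

Lemma mulc_conj (z : R[i]) : z * z^*%C = (normc z ^+ 2)%:C%C.
Proof.
rewrite normc_sqr; case: z => a b /=.
by apply/eqP; rewrite eq_complex /=; apply/andP; split; apply/eqP; ring.
Qed.

Lemma cunitE k (x : 'I_k -> R[i]) :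
  cunit x <-> sqnorm (fun i => complex.Re (x i)) + sqnorm (fun i => complex.Im (x i)) = 1.
Proof.
have -> : sqnorm (fun i => complex.Re (x i)) + sqnorm (fun i => complex.Im (x i)) =
          clpnorm 2%:R x ^+ 2.
  rewrite /clpnorm powR_invn_expn //; last by rewrite sumr_ge0 // => i _; rewrite powR_ge0.
  rewrite /sqnorm -big_split; apply: eq_bigr => i _.
  by rewrite powR_mulrn ?normc_ge0 // normc_sqr.
rewrite /cunit; have : 0 <= clpnorm 2%:R x by apply: powR_ge0.
by split=> [-> | ]; [rewrite expr1n | nra].
Qed.

Definition cvec k (x : 'I_k -> R) : 'I_k -> R[i] := fun i => (x i)%:C%C.

Lemma cunit_cvec k (x : 'I_k -> R) : runit x -> cunit (cvec x).
Proof.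
move/runitE => x1; apply/cunitE; rewrite -[RHS]x1 -[RHS]addr0; congr (_ + _).
by rewrite /sqnorm big1 // => i _; rewrite expr0n.
Qed.

Lemma pair4C_cvec n1 n2 n3 n4 (T : tensor4 R n1 n2 n3 n4) x1 x2 x3 x4 :
  pair4C T (cvec x1) (cvec x2) (cvec x3) (cvec x4) = (pair4R T x1 x2 x3 x4)%:C%C.
Proof.
rewrite /pair4R rmorph_sum; apply: eq_bigr => i _; rewrite rmorph_sum.
apply: eq_bigr => j _; rewrite rmorph_sum; apply: eq_bigr => k _.
by rewrite rmorph_sum; apply: eq_bigr => l _; rewrite !rmorphM conjc_real.
Qed.

Lemma pair3C_cvec n1 n2 n3 (T : tensor3 R n1 n2 n3) x1 x2 x3 :
  pair3C T (cvec x1) (cvec x2) (cvec x3) = (pair3R T x1 x2 x3)%:C%C.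
Proof.
rewrite /pair3R rmorph_sum; apply: eq_bigr => i _; rewrite rmorph_sum.
apply: eq_bigr => j _; rewrite rmorph_sum; apply: eq_bigr => k _.
by rewrite !rmorphM conjc_real.
Qed.

Lemma SepC_cvec n (Y : op2 R n) : SepR Y -> SepC (fun p q => (Y p q)%:C%C).
Proof.
move=> [k [w [v1 [v2 [w0 [w1 [v_unit ->]]]]]]].
exists k, w, (fun j => cvec (v1 j)), (fun j => cvec (v2 j)).
split; first exact: w0.
split; first exact: w1.
split=> [j|]; first by have [] := v_unit j; split; apply: cunit_cvec.
apply: funext => p; apply: funext => q; rewrite rmorph_sum; apply: eq_bigr => j _.
by rewrite /kron /couter /router /cvec !rmorphM !conjc_real.
Qed.

End ComplexFacts.

Section TwoToFourNorm.
Variables (R : realType) (m n : nat) (A : 'M[R]_(m, n)).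
Local Notation normc := (@Normc.normc R).
Let a : 'I_m -> 'I_n -> R := fun t j => A t j.
Let ac : 'I_m -> 'I_n -> R[i] := fun t j => (A t j)%:C%C.

Definition quartic (x : 'I_n -> R) : R := \sum_t rowdot a x t ^+ 4.

Definition quartic_sup : R := sup [set quartic x | x in @runit R n].

Lemma quartic_ge0 x : 0 <= quartic x.
Proof. by apply: sumr_ge0 => t _; apply: exprn_even_ge0. Qed.

Lemma quartic_le_sup x : runit x -> quartic x <= quartic_sup.
Proof.
have bounded : ubound [set quartic x | x in @runit R n] (\sum_t sqnorm (a t) ^+ 2).
  move=> _ [y /runitE y1 <-]; apply: ler_sum => t _.
  rewrite (exprM _ 2 2) lerXn2r ?nnegrE ?sqr_ge0 ?sqnorm_ge0 //.
  by rewrite -[X in _ <= X]mulr1 -y1 sumr_CauchySchwarz.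
move=> x1; apply: sup_upper_bound; last by exists x.
by split; [exists (quartic x), x | exists (\sum_t sqnorm (a t) ^+ 2)].
Qed.

Lemma quartic_sup_ge0 : 0 <= quartic_sup.
Proof.
rewrite /quartic_sup.
have [->|/set0P[_ [x x1 _]]] := eqVneq [set quartic x | x in @runit R n] set0.
  by rewrite sup0.
exact: le_trans (quartic_ge0 x) (quartic_le_sup x1).
Qed.

Lemma quartic_le x : quartic x <= quartic_sup * sqnorm x ^+ 2.
Proof.
have [x0|x_neq0] := eqVneq (sqnorm x) 0.
  rewrite x0 (sqnorm_eq0 x0) expr0n mulr0 /quartic big1 // => t _.
  by rewrite /rowdot big1 ?expr0n // => j _; rewrite mulr0.
have s_gt0 : 0 < Num.sqrt (sqnorm x) by rewrite sqrtr_gt0 lt0r x_neq0 sqnorm_ge0.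
pose s := (Num.sqrt (sqnorm x))^-1.
have s2 : s ^+ 2 * sqnorm x = 1.
  by rewrite exprVn sqr_sqrtr ?sqnorm_ge0 // mulVf.
have unit_sx : runit (fun j => s * x j).
  by apply/runitE; rewrite /sqnorm -[RHS]s2 mulr_sumr; apply: eq_bigr => j _; rewrite exprMn.
have := quartic_le_sup unit_sx; rewrite /quartic.
under eq_bigr => t _ do rewrite rowdotZ exprMn.
rewrite -mulr_sumr -/(quartic x) => le_sx.
have -> : quartic x = sqnorm x ^+ 2 * (s ^+ 4 * quartic x).
  by rewrite mulrA (exprM s 2 2) -exprMn [sqnorm x * _]mulrC s2 expr1n mul1r.
by rewrite mulrC ler_wpM2r ?sqr_ge0.
Qed.

Lemma mixed_quartic_le u v :
  \sum_t (rowdot a u t * rowdot a v t) ^+ 2 <= quartic_sup * sqnorm u * sqnorm v.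
Proof.
have S0 := quartic_sup_ge0.
rewrite -(ler_pXn2r (_ : 0 < 2)%N) ?nnegrE ?sumr_ge0 ?mulr_ge0 ?sqnorm_ge0 //;
  last by move=> t _; apply: sqr_ge0.
under eq_bigr => t _ do rewrite exprMn.
apply: le_trans
  (sumr_CauchySchwarz (fun t => rowdot a u t ^+ 2) (fun t => rowdot a v t ^+ 2)) _.
under eq_bigr => t _ do rewrite -exprM.
under [X in _ * X]eq_bigr => t _ do rewrite -exprM.
rewrite -/(quartic u) -/(quartic v).
have -> : (quartic_sup * sqnorm u * sqnorm v) ^+ 2 =
    (quartic_sup * sqnorm u ^+ 2) * (quartic_sup * sqnorm v ^+ 2) by ring.
by rewrite ler_pM ?quartic_ge0 ?quartic_le.
Qed.

Lemma rowdot_complex z t : rowdot ac z t =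
  (rowdot a (fun j => complex.Re (z j)) t +i* rowdot a (fun j => complex.Im (z j)) t)%C.
Proof.
rewrite /rowdot complex_sum; congr Complex; apply: eq_bigr => j _;
  by rewrite /ac /a; case: (z j) => ? ? /=; ring.
Qed.

Definition cmixed_quartic (x y : 'I_n -> R[i]) : R :=
  \sum_t (normc (rowdot ac x t) * normc (rowdot ac y t)) ^+ 2.

Lemma cmixed_quartic_le x y : cunit x -> cunit y -> cmixed_quartic x y <= quartic_sup.
Proof.
move=> /cunitE x1 /cunitE y1.
pose re (z : 'I_n -> R[i]) j := complex.Re (z j).
pose im (z : 'I_n -> R[i]) j := complex.Im (z j).
have -> : cmixed_quartic x y =
    \sum_t (rowdot a (re x) t * rowdot a (re y) t) ^+ 2 +
    \sum_t (rowdot a (re x) t * rowdot a (im y) t) ^+ 2 +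
    \sum_t (rowdot a (im x) t * rowdot a (re y) t) ^+ 2 +
    \sum_t (rowdot a (im x) t * rowdot a (im y) t) ^+ 2.
  rewrite -!big_split; apply: eq_bigr => t _.
  by rewrite exprMn !rowdot_complex !normc_sqr /=; ring.
apply: le_trans (lerD (lerD (lerD (mixed_quartic_le _ _) (mixed_quartic_le _ _))
  (mixed_quartic_le _ _)) (mixed_quartic_le _ _)) _.
by rewrite -[X in _ <= X]mulr1 -[X in _ <= X]mulr1 -{1}x1 -y1; lra.
Qed.

Lemma pair4R_A4 x1 x2 x3 x4 : pair4R (A4 A) x1 x2 x3 x4 =
  \sum_t rowdot a x1 t * rowdot a x2 t * rowdot a x3 t * rowdot a x4 t.
Proof. exact: moment4_contract. Qed.

Lemma pair4C_A4 x1 x2 x3 x4 : pair4C (A4 A) x1 x2 x3 x4 =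
  \sum_t rowdot ac x1 t * rowdot ac x2 t * rowdot ac x3 t * rowdot ac x4 t.
Proof.
rewrite -moment4_contract; do 4 (apply: eq_bigr => ? _); congr (_ * _).
by rewrite conjc_real rmorph_sum; apply: eq_bigr => t _; rewrite !rmorphM.
Qed.

Lemma pair3R_A3 x y z :
  pair3R (A3 A) x y z = \sum_t rowdot a x t * rowdot a y t * z t.
Proof. exact: moment3_contract. Qed.

Lemma pair3C_A3 x y z :
  pair3C (A3 A) x y z = \sum_t rowdot ac x t * rowdot ac y t * z t.
Proof.
rewrite -moment3_contract; do 3 (apply: eq_bigr => ? _); congr (_ * _).
by rewrite conjc_real rmorph_sum; apply: eq_bigr => t _; rewrite !rmorphM rmorph_nat.
Qed.

Lemma A22_pair_couter v u :
  \sum_p \sum_q ((A22 A p q)%:C%C)^*%C * kron (couter v) (couter u) p q =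
  (cmixed_quartic v u)%:C%C.
Proof.
pose vc i := (v i)^*%C; pose uc i := (u i)^*%C.
have rowdot_conj z t : rowdot ac (fun i => (z i)^*%C) t = (rowdot ac z t)^*%C.
  rewrite rmorph_sum; apply: eq_bigr => j _; rewrite rmorphM /ac.
  by congr (_ * _); apply/esym; apply: conjc_real.
transitivity (\sum_p \sum_q
    ((\sum_t ac t p.1 * ac t q.1 * (ac t p.2 * ac t q.2)) *
     (v p.1 * vc q.1 * (u p.2 * uc q.2)))).
  do 2 (apply: eq_bigr => ? _); congr (_ * _).
  by rewrite conjc_real rmorph_sum; apply: eq_bigr => t _; rewrite /kron /router !rmorphM.
rewrite moment22_contract rmorph_sum; apply: eq_bigr => t _.
by rewrite !rowdot_conj exprMn rmorphM -mulrA !mulc_conj.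
Qed.

Lemma normc_pair4C_le x1 x2 x3 x4 :
  cunit x1 -> cunit x2 -> cunit x3 -> cunit x4 ->
  normc (pair4C (A4 A) x1 x2 x3 x4) <= quartic_sup.
Proof.
move=> u1 u2 u3 u4; rewrite pair4C_A4.
apply: le_trans (ler_normc_sum _ _) _.
pose p t := normc (rowdot ac x1 t) * normc (rowdot ac x2 t).
pose q t := normc (rowdot ac x3 t) * normc (rowdot ac x4 t).
have -> : \sum_t normc (rowdot ac x1 t * rowdot ac x2 t * rowdot ac x3 t * rowdot ac x4 t)
    = \sum_t p t * q t.
  by apply: eq_bigr => t _; rewrite !Normc.normcM mulrA.
rewrite -(ler_pXn2r (_ : 0 < 2)%N) ?nnegrE ?quartic_sup_ge0 //; last first.
  by apply: sumr_ge0 => t _; rewrite !mulr_ge0 ?normc_ge0.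
apply: le_trans (sumr_CauchySchwarz p q) _.
by rewrite ler_pM ?sumr_ge0 ?cmixed_quartic_le // => t _; rewrite sqr_ge0.
Qed.

Lemma normc_pair3C_le x y z : cunit x -> cunit y -> cunit z ->
  normc (pair3C (A3 A) x y z) ^+ 2 <= quartic_sup.
Proof.
move=> ux uy /cunitE uz; rewrite pair3C_A3.
pose p t := normc (rowdot ac x t) * normc (rowdot ac y t).
have sum_z : \sum_t normc (z t) ^+ 2 = 1.
  by rewrite -uz /sqnorm -big_split; apply: eq_bigr => t _; rewrite normc_sqr.
have le_sum : normc (\sum_t rowdot ac x t * rowdot ac y t * z t) <=
    \sum_t p t * normc (z t).
  by apply: le_trans (ler_normc_sum _ _) _; apply: ler_sum => t _; rewrite !Normc.normcM.
apply: le_trans (_ : _ <= (\sum_t p t * normc (z t)) ^+ 2) _.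
  by rewrite lerXn2r ?nnegrE ?normc_ge0 // (le_trans (normc_ge0 _) le_sum).
apply: le_trans (sumr_CauchySchwarz _ _) _.
by rewrite sum_z mulr1 cmixed_quartic_le.
Qed.

Lemma normc_hSepC_le Y : SepC Y ->
  normc (\sum_p \sum_q ((A22 A p q)%:C%C)^*%C * Y p q) <= quartic_sup.
Proof.
move=> [k [w [v1 [v2 [w0 [w1 [v_unit ->]]]]]]].
have -> : \sum_p \sum_q ((A22 A p q)%:C%C)^*%C *
      (\sum_(j < k) (w j)%:C%C * kron (couter (v1 j)) (couter (v2 j)) p q) =
    (\sum_j w j * cmixed_quartic (v1 j) (v2 j))%:C%C.
  under eq_bigr => p _ do under eq_bigr => q _ do rewrite mulr_sumr.
  under eq_bigr => p _ do rewrite exchange_big.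
  rewrite exchange_big rmorph_sum; apply: eq_bigr => j _.
  transitivity ((w j)%:C%C * (cmixed_quartic (v1 j) (v2 j))%:C%C); last by rewrite rmorphM.
  rewrite -A22_pair_couter mulr_sumr; apply: eq_bigr => p _.
  by rewrite mulr_sumr; apply: eq_bigr => q _; rewrite mulrCA.
rewrite normc_real ger0_norm; last first.
  by rewrite sumr_ge0 // => j _; rewrite mulr_ge0 ?sumr_ge0 // => t _; rewrite sqr_ge0.
rewrite -[X in _ <= X]mul1r -w1 mulr_suml ler_sum // => j _.
by have [u1 u2] := v_unit j; rewrite ler_wpM2l ?cmixed_quartic_le.
Qed.

Lemma abs_pair4R_le x1 x2 x3 x4 :
  runit x1 -> runit x2 -> runit x3 -> runit x4 ->
  `|pair4R (A4 A) x1 x2 x3 x4| <= quartic_sup.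
Proof.
move=> u1 u2 u3 u4; rewrite -normc_real -pair4C_cvec.
by apply: normc_pair4C_le; apply: cunit_cvec.
Qed.

Lemma abs_pair3R_le x y z : runit x -> runit y -> runit z ->
  `|pair3R (A3 A) x y z| ^+ 2 <= quartic_sup.
Proof.
move=> ux uy uz; rewrite -normc_real -pair3C_cvec.
by apply: normc_pair3C_le; apply: cunit_cvec.
Qed.

Lemma A22_pairC (Y : op2 R n) :
  (\sum_p \sum_q A22 A p q * Y p q)%:C%C =
  \sum_p \sum_q ((A22 A p q)%:C%C)^*%C * (Y p q)%:C%C.
Proof.
rewrite rmorph_sum; apply: eq_bigr => p _; rewrite rmorph_sum; apply: eq_bigr => q _.
by rewrite rmorphM conjc_real.
Qed.

Lemma abs_hSepR_le Y : SepR Y -> `|\sum_p \sum_q A22 A p q * Y p q| <= quartic_sup.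
Proof.
by move=> SY; rewrite -normc_real A22_pairC; apply: normc_hSepC_le; apply: SepC_cvec.
Qed.

Lemma pair4R_A4_diag x : pair4R (A4 A) x x x x = quartic x.
Proof. by rewrite pair4R_A4; apply: eq_bigr => t _; ring. Qed.

(* The equality case of Cauchy-Schwarz in the third slot. *)
Lemma pair3R_A3_witness x : 0 < quartic x ->
  exists2 z, runit z & pair3R (A3 A) x x z ^+ 2 = quartic x.
Proof.
move=> q_gt0; have s_gt0 : 0 < Num.sqrt (quartic x) by rewrite sqrtr_gt0.
have s2 : Num.sqrt (quartic x) ^+ 2 = quartic x by rewrite sqr_sqrtr ?quartic_ge0.
exists (fun t => rowdot a x t ^+ 2 / Num.sqrt (quartic x)).
  apply/runitE; rewrite /sqnorm; under eq_bigr => t _ do rewrite expr_div_n -exprM.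
  by rewrite -mulr_suml s2 divff ?gt_eqF.
rewrite pair3R_A3 (_ : \sum_t _ = quartic x / Num.sqrt (quartic x)); last first.
  by rewrite mulr_suml; apply: eq_bigr => t _; ring.
by rewrite expr_div_n s2 expr2 mulfK ?gt_eqF.
Qed.

Lemma SepR_kron_router x : runit x -> @SepR R n (kron (router x) (router x)).
Proof.
move=> ux; exists 1%N, (fun _ => 1), (fun _ => x), (fun _ => x).
split=> [j|]; first exact: ler01.
split; first by rewrite big_ord1.
split=> [j|]; first by split.
by apply: funext => p; apply: funext => q; rewrite big_ord1 mul1r.
Qed.

Lemma A22_pair_router x :
  \sum_p \sum_q A22 A p q * kron (router x) (router x) p q = quartic x.
Proof.
by rewrite moment22_contract; apply: eq_bigr => t _; ring.
Qed.

Lemma lpnorm4_mxapply x : lpnorm 4%:R (mxapply A x) ^+ 4 = quartic x.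
Proof.
rewrite lpnorm_expn //; apply: eq_bigr => t _.
by rewrite -normrX ger0_norm // exprn_even_ge0.
Qed.

Lemma norm2to4_quartic_sup : norm2to4 A ^+ 4 = quartic_sup.
Proof.
apply: sup_expn_eq => //; first exact: quartic_sup_ge0.
- by move=> _ [x [_ ->]]; rewrite divr_ge0 // powR_ge0.
- move=> _ [x [x_neq0 ->]].
  have x_gt0 : 0 < sqnorm x ^+ 2.
    by rewrite exprn_gt0 // lt0r sqnorm_ge0 andbT; apply/eqP => /sqnorm_eq0.
  rewrite expr_div_n lpnorm4_mxapply (exprM _ 2 2) lpnorm2_sqr.
  by rewrite ler_pdivrMr // quartic_le.
- move=> _ [x x1 <-] _; have /runitE sx1 := x1.
  exists (lpnorm 4%:R (mxapply A x) / lpnorm 2%:R x);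
    last by rewrite x1 divr1 lpnorm4_mxapply.
  exists x; split=> // x0; have := oner_neq0 R.
  by rewrite -sx1 x0 /sqnorm big1 ?eqxx // => j _; rewrite expr0n.
Qed.

Lemma inj4_quartic_sup : inj4 (A4 A) = quartic_sup.
Proof.
rewrite -[LHS]expr1; apply: sup_expn_eq => //; first exact: quartic_sup_ge0.
- by move=> _ [x1 [x2 [x3 [x4 [_ [_ [_ [_ ->]]]]]]]].
- move=> _ [x1 [x2 [x3 [x4 [u1 [u2 [u3 [u4 ->]]]]]]]].
  by rewrite expr1; apply: abs_pair4R_le.
- move=> _ [x x1 <-] _; exists `|pair4R (A4 A) x x x x|; first by exists x, x, x, x.
  by rewrite expr1 pair4R_A4_diag ger0_norm ?quartic_ge0.
Qed.

Lemma inj4C_quartic_sup : inj4C (A4 A) = quartic_sup.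
Proof.
rewrite -[LHS]expr1; apply: sup_expn_eq => //; first exact: quartic_sup_ge0.
- by move=> _ [x1 [x2 [x3 [x4 [_ [_ [_ [_ ->]]]]]]]]; apply: normc_ge0.
- move=> _ [x1 [x2 [x3 [x4 [u1 [u2 [u3 [u4 ->]]]]]]]].
  by rewrite expr1; apply: normc_pair4C_le.
- move=> _ [x x1 <-] _.
  exists (normc (pair4C (A4 A) (cvec x) (cvec x) (cvec x) (cvec x))).
    by have cx := cunit_cvec x1; exists (cvec x), (cvec x), (cvec x), (cvec x).
  by rewrite expr1 pair4C_cvec normc_real pair4R_A4_diag ger0_norm ?quartic_ge0.
Qed.

Lemma inj3_quartic_sup : inj3 (A3 A) ^+ 2 = quartic_sup.
Proof.
apply: sup_expn_eq => //; first exact: quartic_sup_ge0.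
- by move=> _ [x [y [z [_ [_ [_ ->]]]]]].
- by move=> _ [x [y [z [ux [uy [uz ->]]]]]]; apply: abs_pair3R_le.
- move=> _ [x x1 <-] q_gt0; have [z uz z_val] := pair3R_A3_witness q_gt0.
  exists `|pair3R (A3 A) x x z|; first by exists x, x, z.
  by rewrite real_normK ?num_real ?z_val.
Qed.

Lemma inj3C_quartic_sup : inj3C (A3 A) ^+ 2 = quartic_sup.
Proof.
apply: sup_expn_eq => //; first exact: quartic_sup_ge0.
- by move=> _ [x [y [z [_ [_ [_ ->]]]]]]; apply: normc_ge0.
- by move=> _ [x [y [z [ux [uy [uz ->]]]]]]; apply: normc_pair3C_le.
- move=> _ [x x1 <-] q_gt0; have [z uz z_val] := pair3R_A3_witness q_gt0.
  exists (normc (pair3C (A3 A) (cvec x) (cvec x) (cvec z))).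
    by have [cx cz] := (cunit_cvec x1, cunit_cvec uz); exists (cvec x), (cvec x), (cvec z).
  by rewrite pair3C_cvec normc_real real_normK ?num_real ?z_val.
Qed.

Lemma hSepR_quartic_sup : hSepR (A22 A) = quartic_sup.
Proof.
rewrite -[LHS]expr1; apply: sup_expn_eq => //; first exact: quartic_sup_ge0.
- by move=> _ [Y [_ ->]].
- by move=> _ [Y [SY ->]]; rewrite expr1; apply: abs_hSepR_le.
- move=> _ [x x1 <-] _; exists `|quartic x|; last by rewrite expr1 ger0_norm ?quartic_ge0.
  exists (kron (router x) (router x)); rewrite A22_pair_router.
  by split=> //; apply: SepR_kron_router.
Qed.

Lemma hSepC_quartic_sup : hSepC (fun p q => (A22 A p q)%:C%C) = quartic_sup.
Proof.
rewrite -[LHS]expr1; apply: sup_expn_eq => //; first exact: quartic_sup_ge0.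
- by move=> _ [Y [_ ->]]; apply: normc_ge0.
- by move=> _ [Y [SY ->]]; rewrite expr1; apply: normc_hSepC_le.
- move=> _ [x x1 <-] _; exists `|quartic x|; last by rewrite expr1 ger0_norm ?quartic_ge0.
  exists (fun p q => (kron (router x) (router x) p q)%:C%C).
  rewrite -A22_pairC normc_real A22_pair_router; split => //.
  by apply: SepC_cvec; apply: SepR_kron_router.
Qed.

End TwoToFourNorm.

Theorem lemma9p3 (R : realType) (m n : nat) (A : 'M[R]_(m, n)) :
  norm2to4 A ^+ 4 = inj4 (A4 A) /\
  inj4 (A4 A) = inj3 (A3 A) ^+ 2 /\
  inj3 (A3 A) ^+ 2 = inj4C (A4 A) /\
  inj4C (A4 A) = inj3C (A3 A) ^+ 2 /\
  inj3C (A3 A) ^+ 2 = hSepR (A22 A) /\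
  hSepR (A22 A) = hSepC (fun p q => (A22 A p q)%:C%C).
Proof.
rewrite norm2to4_quartic_sup inj4_quartic_sup inj3_quartic_sup inj4C_quartic_sup.
by rewrite inj3C_quartic_sup hSepR_quartic_sup hSepC_quartic_sup.
Qed.
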